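(* Let $k\in\mathbb{N}$. For any three polygonal curves $\sigma$, $\tau$, $\upsilon$ in $\mathbb{R}^d$ (of arbitrary, possibly different, complexities) it holds that $$d_{k\text{-}DTW}(\sigma,\tau)\le k\cdot\big(d_{k\text{-}DTW}(\sigma,\upsilon)+d_{k\text{-}DTW}(\upsilon,\tau)\big).$$ This bound is tight, i.e., there exist curves $\sigma,\tau,\upsilon$ for which equality holds. Further, there is no constant $c>0$ independent of $k$ and of the complexities of the curves such that $d_{k\text{-}DTW}(\sigma,\tau)\le c\cdot\big(d_{k\text{-}DTW}(\sigma,\upsilon)+d_{k\text{-}DTW}(\upsilon,\tau)\big)$ holds for all triples of curves.
   Context: A polygonal curve of complexity $m$ in $\mathbb{R}^d$ is identified with its sequence of vertices $(w_1,\dots,w_m)$, $w_i\in\mathbb{R}^d$. For curves $\sigma=(v_1,\dots,v_{m'})$ and $\tau=(w_1,\dots,w_{m''})$, a traversal $T$ is a sequence of index pairs $(i,j)$ that starts with $(1,1)$, ends with $(m',m'')$, and in which each pair $(i,j)$ is followed only by $(i+1,j)$, $(i,j+1)$ or $(i+1,j+1)$; $\mathcal{T}$ denotes the set of all traversals. For a traversal $T$ let $s^{(T)}_1\ge s^{(T)}_2\ge\dots\ge s^{(T)}_{|T|}$ be the Euclidean distances $\|v_i-w_j\|$ over the pairs $(i,j)\in T$ sorted non-increasingly, and set $s^{(T)}_l=0$ for $l>|T|$. The $k$-DTW distance is $d_{k\text{-}DTW}(\sigma,\tau)=\min_{T\in\mathcal{T}}\sum_{l=1}^k s^{(T)}_l$.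 *)

From HB Require Import structures.
From mathcomp Require Import all_boot all_order all_algebra.
From mathcomp Require Import boolp classical_sets reals.
Set Implicit Arguments. Unset Strict Implicit. Unset Printing Implicit Defensive.
Import Order.TTheory GRing.Theory Num.Theory.
Local Open Scope ring_scope.

Section KDTW.
Variables (R : realType) (d : nat).

Definition edist (v w : 'rV[R]_d) : R :=
  Num.sqrt (\sum_(i < d) (v 0 i - w 0 i) ^+ 2).

(* A polygonal curve: its non-empty sequence of vertices (complexity = size). *)
Record curve := Curve { verts : seq 'rV[R]_d; verts_ne : (0 < size verts)%N }.

(* Traversals, 0-indexed: pairs (i,j) from (0,0) to (m1-1, m2-1), each step
   being (i+1,j), (i,j+1) or (i+1,j+1). *)
Definition tstep (p q : nat * nat) : bool :=
  [|| q == (p.1.+1, p.2), q == (p.1, p.2.+1) | q == (p.1.+1, p.2.+1)].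

Definition is_traversal (m1 m2 : nat) (T : seq (nat * nat)) : bool :=
  match T with
  | [::] => false
  | p :: T' => [&& p == (0%N, 0%N), path tstep p T' & last p T' == (m1.-1, m2.-1)]
  end.

(* Sum of the k largest distances along T (padded with zeros). *)
Definition tcost (k : nat) (s t : curve) (T : seq (nat * nat)) : R :=
  let ds := [seq edist (nth 0 (verts s) p.1) (nth 0 (verts t) p.2) | p <- T] in
  let sds := sort (fun x y : R => y <= x) ds in
  \sum_(l < k) nth 0 sds l.

(* k-DTW distance: minimum (= infimum of the finite nonempty set) over traversals. *)
Definition kDTW (k : nat) (s t : curve) : R :=
  inf [set x : R | exists T, is_traversal (size (verts s)) (size (verts t)) T
                          /\ x = tcost k s t T]%classic.
End KDTW.

(** A traversal of (σ, τ) whose k-DTW cost is c contains no pair at distance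
    more than c (for k > 0).  Glueing a traversal of (σ, υ) of cost a to one of
    (υ, τ) of cost b along their common index on υ gives a traversal of (σ, τ)
    in which every pair (i, j) passes through some υ_l, so by the triangle
    inequality all its distances are at most a + b and its cost is at most
    k (a + b).  For equality take σ = (p), υ = (q) and τ = k copies of q:
    every traversal of (σ, τ) has at least k pairs at distance |p - q|, while
    d(σ, υ) = |p - q| and d(υ, τ) = 0.  Letting k grow rules out a uniform
    constant. *)
From mathcomp Require Import all_boot all_order all_algebra.
From mathcomp Require Import classical_sets reals.
From mathcomp Require Import ring lra zify.
Set Implicit Arguments. Unset Strict Implicit. Unset Printing Implicit Defensive.
Import Order.TTheory GRing.Theory Num.Theory.
Local Open Scope ring_scope.

Lemma sum_sqr_ge0 (R : realDomainType) (n : nat) (x : 'I_n -> R) :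
  0 <= \sum_i x i ^+ 2.
Proof. by apply: sumr_ge0 => i _; apply: sqr_ge0. Qed.

Lemma lagrange_identity (R : comPzRingType) (n : nat) (x y : 'I_n -> R) :
  \sum_i \sum_j (x i * y j - x j * y i) ^+ 2 =
  2 * ((\sum_i x i ^+ 2) * (\sum_j y j ^+ 2) - (\sum_i x i * y i) ^+ 2).
Proof.
have -> : \sum_i \sum_j (x i * y j - x j * y i) ^+ 2 =
    \sum_i \sum_j (x i ^+ 2 * y j ^+ 2 + x j ^+ 2 * y i ^+ 2
                   - (x i * y i * (x j * y j)) *+ 2).
  by apply: eq_bigr => i _; apply: eq_bigr => j _; ring.
rewrite [(\sum_i x i * y i) ^+ 2]expr2 !big_distrlr /=.
under eq_bigr do rewrite sumrB big_split /= sumrMnl.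
by rewrite sumrB big_split /= sumrMnl exchange_big /=; ring.
Qed.

Lemma cauchy_schwarz_sqrt (R : rcfType) (n : nat) (x y : 'I_n -> R) :
  \sum_i x i * y i <= Num.sqrt (\sum_i x i ^+ 2) * Num.sqrt (\sum_i y i ^+ 2).
Proof.
rewrite -sqrtrM ?sum_sqr_ge0 //; apply: le_trans (ler_norm _) _.
rewrite -sqrtr_sqr ler_wsqrtr // -subr_ge0 -(pmulr_rge0 _ (ltr0n _ 2)).
by rewrite -lagrange_identity; apply: sumr_ge0 => i _; apply: sum_sqr_ge0.
Qed.

Lemma minkowski_sqrt (R : rcfType) (n : nat) (x y : 'I_n -> R) :
  Num.sqrt (\sum_i (x i + y i) ^+ 2) <=
  Num.sqrt (\sum_i x i ^+ 2) + Num.sqrt (\sum_i y i ^+ 2).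
Proof.
rewrite -(ger0_norm (addr_ge0 (sqrtr_ge0 _) (sqrtr_ge0 _))) -sqrtr_sqr ler_wsqrtr //.
under eq_bigr do rewrite sqrrD.
rewrite !big_split /= sqrrD !sqr_sqrtr ?sum_sqr_ge0 //.
have := cauchy_schwarz_sqrt x y; lra.
Qed.

Lemma edist_triangle (R : realType) (d : nat) (v u w : 'rV[R]_d) :
  edist v w <= edist v u + edist u w.
Proof.
have := minkowski_sqrt (fun i => v 0 i - u 0 i) (fun i => u 0 i - w 0 i).
by under eq_bigr do rewrite addrA subrK.
Qed.

Lemma tstepE i j i' j' : tstep (i, j) (i', j') =
  [&& (i <= i' <= i.+1)%N, (j <= j' <= j.+1)%N & (i + j < i' + j')%N].
Proof. rewrite /tstep /= !xpair_eqE; apply/idP/idP; lia. Qed.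

(* Unlike traversals, these paths may make stationary steps; this is what
   makes [reachable_comp] a plain double induction. *)
Inductive reachable (P : nat -> nat -> Prop) : nat -> nat -> Prop :=
| reachable0 : P 0%N 0%N -> reachable P 0 0
| reachableS i j i' j' : reachable P i j ->
    (i <= i' <= i.+1)%N -> (j <= j' <= j.+1)%N -> P i' j' -> reachable P i' j'.

Lemma reachable_path P p T : path tstep p T ->
  (forall q, q \in T -> P q.1 q.2) ->
  reachable P p.1 p.2 -> reachable P (last p T).1 (last p T).2.
Proof.
elim: T p => [|[i' j'] T IH] [i j] //= /andP [st pT] PT rp.
apply: (IH _ pT) => [q qT | /=]; first by apply: PT; rewrite inE qT orbT.
move: st; rewrite tstepE => /and3P [hi hj _].
exact: reachableS rp hi hj (PT _ (mem_head _ _)).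
Qed.

Lemma reachable_traversal P m1 m2 T : is_traversal m1 m2 T ->
  (forall q, q \in T -> P q.1 q.2) -> reachable P m1.-1 m2.-1.
Proof.
case: T => [|p T] //= /and3P [/eqP p0 pT /eqP lT] PT.
have := reachable_path pT (fun q qT => PT q (predU1r _ _ qT)).
rewrite lT p0; apply; apply: reachable0.
by have := PT p (mem_head _ _); rewrite p0.
Qed.

Lemma traversal_reachable P i j : reachable P i j ->
  exists2 T, is_traversal i.+1 j.+1 T & forall q, q \in T -> P q.1 q.2.
Proof.
elim=> [P00 | {}i {}j i' j' _ [T tT PT] hi hj Pij].
  by exists [:: (0, 0)%N] => // q; rewrite inE => /eqP ->.
have [/andP [/eqP <- /eqP <-] | moved] := boolP ((i == i') && (j == j')).
  by exists T.
case: T tT PT => [|p T] //= /and3P [p0 pT /eqP lT] PT.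
exists (p :: rcons T (i', j')) => [|q].
  by rewrite /= p0 rcons_path pT lT tstepE hi hj last_rcons eqxx /=; lia.
by rewrite -rcons_cons mem_rcons inE => /orP [/eqP -> // | /PT].
Qed.

Lemma reachable_comp P1 P2 i l j : reachable P1 i l -> reachable P2 l j ->
  reachable (fun i j => exists l, P1 i l /\ P2 l j) i j.
Proof.
set Q := fun i j => _.
have stay k : (k <= k <= k.+1)%N by rewrite leqnn leqnSn.
move=> H1; elim: H1 j => [P1_00 | {}i {}l i' l' _ IH1 hi hl P1_il'] j.
  have col0 l2 : reachable P2 l2 j -> l2 = 0%N -> reachable Q 0 j.
    elim=> [P2_00 _ | {}l2 j2 l'' j'' _ IH2 hl2 hj P2_lj l0].
      by apply: reachable0; exists 0%N.
    apply: (reachableS (IH2 _) (stay 0%N) hj); first lia.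
    by exists l''; rewrite l0 in P2_lj *.
  by move=> H2; apply: col0 H2 _.
move=> H2; elim: H2 hl P1_il' => [P2_00 | l2 j2 l'' j'' H2 IH2 hl2 hj P2_lj] hl P1_il.
  have l0 : l = 0%N by lia.
  rewrite l0 in IH1.
  by apply: (reachableS (IH1 _ (reachable0 P2_00)) hi (stay 0%N)); exists 0%N.
have Q_ij : Q i' j'' by exists l''.
have [l_l'' | l_l''] := eqVneq l l''.
  rewrite l_l'' in IH1.
  exact: reachableS (IH1 _ (reachableS H2 hl2 hj P2_lj)) hi (stay _) Q_ij.
have [l2_l'' | l2_l''] := eqVneq l2 l''.
  rewrite -l2_l'' in hl P1_il.
  exact: reachableS (IH2 hl P1_il) (stay _) hj Q_ij.
have l2_l : l2 = l by lia.
by rewrite l2_l in H2; exact: reachableS (IH1 _ H2) hi hj Q_ij.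
Qed.

Lemma reachableT i j : reachable (fun _ _ => True) i j.
Proof.
have stay k : (k <= k <= k.+1)%N by rewrite leqnn leqnSn.
have next k : (k <= k.+1 <= k.+1)%N by rewrite leqnSn leqnn.
elim: i j => [|i IHi] j; last exact: reachableS (IHi j) (next i) (stay j) I.
elim: j => [|j IHj]; first exact: reachable0.
exact: reachableS IHj (stay 0%N) (next j) I.
Qed.

Lemma traversal_exists m1 m2 : exists T, is_traversal m1 m2 T.
Proof. by have [T tT _] := traversal_reachable (reachableT m1.-1 m2.-1); exists T. Qed.

Lemma traversal_comp m1 m2 m3 T1 T2 :
  is_traversal m1 m2 T1 -> is_traversal m2 m3 T2 ->
  exists2 T, is_traversal m1 m3 T &
    forall q, q \in T -> exists l, (q.1, l) \in T1 /\ (l, q.2) \in T2.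
Proof.
move=> tT1 tT2.
have r1 := @reachable_traversal (fun i l => (i, l) \in T1) _ _ _ tT1 (fun '(i, l) => id).
have r2 := @reachable_traversal (fun l j => (l, j) \in T2) _ _ _ tT2 (fun '(l, j) => id).
by have [T tT PT] := traversal_reachable (reachable_comp r1 r2); exists T.
Qed.

Lemma path_bounds p T : path tstep p T -> forall q, q \in p :: T ->
  (q.1 <= (last p T).1)%N /\ (q.2 <= (last p T).2)%N.
Proof.
elim: T p => [|r T IH] p /=; first by move=> _ q; rewrite inE => /eqP ->.
move=> /andP [st pT] q; rewrite inE => /orP [/eqP -> | qT]; last exact: IH.
have [] := IH r pT r (mem_head _ _).
by move: st; case: r {pT} => [i' j']; case: p => [i j]; rewrite tstepE /=; lia.
Qed.

Lemma path_size p T : path tstep p T -> ((last p T).2 <= p.2 + size T)%N.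
Proof.
elim: T p => [|r T IH] p /=; first by rewrite addn0.
move=> /andP [st pT]; have := IH r pT.
by move: st; case: r {pT} => [i' j']; case: p => [i j]; rewrite tstepE /=; lia.
Qed.

Lemma traversal_bounds m1 m2 T : is_traversal m1 m2 T ->
  forall q, q \in T -> (q.1 <= m1.-1)%N /\ (q.2 <= m2.-1)%N.
Proof.
by case: T => [|p T] //= /and3P [_ pT /eqP lT] q /(path_bounds pT); rewrite lT.
Qed.

Lemma traversal_size m1 m2 T : is_traversal m1 m2 T -> (m2.-1 < size T)%N.
Proof.
case: T => [|p T] //= /and3P [/eqP p0 pT /eqP lT].
by have := path_size pT; rewrite lT p0.
Qed.

Section TopK.
Variable R : realDomainType.
Implicit Types (ds : seq R) (k : nat).

Definition topk k ds : R := \sum_(l < k) nth 0 (sort (fun x y : R => y <= x) ds) l.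

Let ge_total : total (fun x y : R => y <= x).
Proof. by move=> x y; rewrite le_total. Qed.

Let ge_trans : transitive (fun x y : R => y <= x).
Proof. by move=> y x z xy yz; apply: le_trans yz xy. Qed.

Lemma nth_sort_mem ds l :
  (l < size ds)%N -> nth 0 (sort (fun x y : R => y <= x) ds) l \in ds.
Proof. by move=> h; rewrite -(mem_sort (fun x y : R => y <= x)) mem_nth // size_sort. Qed.

Lemma nth_sort_ge0 ds l :
  all (>= 0) ds -> 0 <= nth 0 (sort (fun x y : R => y <= x) ds) l.
Proof.
move=> /allP ds_ge0; have [l_lt | l_ge] := ltnP l (size ds).
  exact: ds_ge0 (nth_sort_mem l_lt).
by rewrite nth_default // size_sort.
Qed.

Lemma topk_ge0 k ds : all (>= 0) ds -> 0 <= topk k ds.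
Proof. by move=> ds_ge0; apply: sumr_ge0 => l _; apply: nth_sort_ge0. Qed.

Lemma topk_le k ds M : 0 <= M -> all (<= M) ds -> topk k ds <= k%:R * M.
Proof.
move=> M_ge0 /allP ds_le.
rewrite (_ : k%:R * M = \sum_(l < k) M); last by rewrite sumr_const card_ord mulr_natl.
apply: ler_sum => l _; have [l_lt | l_ge] := ltnP l (size ds).
  exact: ds_le (nth_sort_mem l_lt).
by rewrite nth_default // size_sort.
Qed.

Lemma topk_const k ds c :
  all (pred1 c) ds -> (k <= size ds)%N -> topk k ds = k%:R * c.
Proof.
move=> /allP ds_c k_le.
rewrite (_ : k%:R * c = \sum_(l < k) c); last by rewrite sumr_const card_ord mulr_natl.
apply: eq_bigr => l _; apply/eqP/ds_c/nth_sort_mem.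
exact: leq_trans (ltn_ord l) k_le.
Qed.

Lemma mem_le_topk k ds x : (0 < k)%N -> all (>= 0) ds -> x \in ds -> x <= topk k ds.
Proof.
case: k => // k _ ds_ge0 x_ds; rewrite /topk big_ord_recl /=.
apply: ler_wpDr; first by apply: sumr_ge0 => l _; apply: nth_sort_ge0.
set s := sort _ ds; rewrite -(mem_sort (fun x y : R => y <= x)) -/s in x_ds.
rewrite -(nth_index 0 x_ds).
have idx_lt : (index x s < size s)%N by rewrite index_mem.
apply: (sorted_leq_nth ge_trans lexx 0 (sort_sorted ge_total ds)) => //.
by rewrite inE (leq_ltn_trans (leq0n _) idx_lt).
Qed.

Lemma topk_seq1 k x : (0 < k)%N -> topk k [:: x] = x.
Proof.
case: k => // k _; rewrite /topk big_ord_recl big1 ?addr0 // => l _.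
by rewrite nth_default.
Qed.

End TopK.

Section KDTWTriangle.
Variables (R : realType) (d : nat).
Implicit Types (s t u : curve R d) (T : seq (nat * nat)).

Definition vdist s t (p : nat * nat) : R :=
  edist (nth 0 (verts s) p.1) (nth 0 (verts t) p.2).

Lemma tcostE k s t T : tcost k s t T = topk k (map (vdist s t) T).
Proof. by []. Qed.

Lemma vdist_ge0 s t T : all (>= 0) (map (vdist s t) T).
Proof. by apply/allP => x /mapP [p _ ->]; apply: sqrtr_ge0. Qed.

Lemma vdist_le_tcost k s t T p : (0 < k)%N -> p \in T -> vdist s t p <= tcost k s t T.
Proof. by move=> k_gt0 pT; apply: mem_le_topk k_gt0 (vdist_ge0 _ _ _) (map_f _ pT). Qed.

Lemma kDTW_le_tcost k s t T : is_traversal (size (verts s)) (size (verts t)) T ->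
  kDTW k s t <= tcost k s t T.
Proof.
move=> tT; apply: ge_inf; last by exists T.
by exists 0 => x [T' [_ ->]]; apply: topk_ge0 (vdist_ge0 _ _ _).
Qed.

Lemma lb_le_kDTW k s t x :
  (forall T, is_traversal (size (verts s)) (size (verts t)) T -> x <= tcost k s t T) ->
  x <= kDTW k s t.
Proof.
move=> x_le; apply: lb_le_inf => [|_ [T [tT ->]]]; last exact: x_le.
have [T tT] := traversal_exists (size (verts s)) (size (verts t)).
by exists (tcost k s t T), T.
Qed.

Lemma kDTW_le_tcost_comp k s t u T1 T2 : (0 < k)%N ->
  is_traversal (size (verts s)) (size (verts u)) T1 ->
  is_traversal (size (verts u)) (size (verts t)) T2 ->
  kDTW k s t <= k%:R * (tcost k s u T1 + tcost k u t T2).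
Proof.
move=> k_gt0 tT1 tT2; have [T tT T_comp] := traversal_comp tT1 tT2.
apply: le_trans (kDTW_le_tcost k tT) _; apply: topk_le.
  by apply: addr_ge0; apply: topk_ge0 (vdist_ge0 _ _ _).
apply/allP => _ /mapP [[i j] /T_comp [l [il lj]] ->].
apply: le_trans (edist_triangle _ (nth 0 (verts u) l) _) _.
by apply: lerD; [exact: (vdist_le_tcost s u k_gt0 il) |
                 exact: (vdist_le_tcost u t k_gt0 lj)].
Qed.

Lemma kDTW_triangle k s t u : kDTW k s t <= k%:R * (kDTW k s u + kDTW k u t).
Proof.
case: k => [|k].
  have [T tT] := traversal_exists (size (verts s)) (size (verts t)).
  by rewrite mul0r; apply: le_trans (kDTW_le_tcost 0 tT) _; rewrite /tcost big_ord0.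
set X := kDTW _ s t; have k_gt0 : 0 < k.+1%:R :> R by rewrite ltr0n.
rewrite -ler_pdivrMl // -lerBlDr; apply: lb_le_kDTW => T2 tT2.
rewrite lerBlDr addrC -lerBlDr; apply: lb_le_kDTW => T1 tT1.
by rewrite lerBlDr addrC ler_pdivrMl // kDTW_le_tcost_comp.
Qed.

End KDTWTriangle.

Section Tightness.
Variables (R : realType) (d : nat).
Implicit Types (v w : 'rV[R]_d) (k m : nat).

Definition point_curve (v : 'rV[R]_d) : curve R d := @Curve R d [:: v] isT.

(* [m.+1] copies, so that non-emptiness holds by computation. *)
Definition nseq_curve (m : nat) (v : 'rV[R]_d) : curve R d := @Curve R d (nseq m.+1 v) isT.

Lemma edist_xx v : edist v v = 0.
Proof. by rewrite /edist big1 ?sqrtr0 // => i _; rewrite subrr expr0n. Qed.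

Lemma edist0_const1 : edist (0 : 'rV[R]_d) (const_mx 1) = Num.sqrt d%:R.
Proof.
rewrite /edist; under eq_bigr do rewrite !mxE sub0r sqrrN expr1n.
by rewrite sumr_const card_ord.
Qed.

Lemma vdist_point_nseq v w m T :
  is_traversal (size (verts (point_curve v))) (size (verts (nseq_curve m w))) T ->
  all (pred1 (edist v w)) (map (vdist (point_curve v) (nseq_curve m w)) T).
Proof.
move=> /traversal_bounds; rewrite size_nseq /= => T_bounds.
apply/allP => _ /mapP [[i j] /T_bounds /= [i0 jm] ->].
by move: i0; rewrite leqn0 => /eqP ->; rewrite /vdist nth_nseq ltnS jm.
Qed.

Lemma kDTW_point_nseq k v w m : (k <= m.+1)%N ->
  kDTW k (point_curve v) (nseq_curve m w) = k%:R * edist v w.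
Proof.
move=> k_le.
have tcost_eq T : is_traversal 1 (size (verts (nseq_curve m w))) T ->
    tcost k (point_curve v) (nseq_curve m w) T = k%:R * edist v w.
  move=> tT; rewrite tcostE; apply: topk_const (vdist_point_nseq tT) _.
  by rewrite size_map (leq_trans k_le) //; have := traversal_size tT; rewrite size_nseq.
apply/eqP; rewrite eq_le; apply/andP; split; last by apply: lb_le_kDTW => T /tcost_eq ->.
have [T tT] := traversal_exists 1 (size (verts (nseq_curve m w))).
by rewrite -(tcost_eq T tT) kDTW_le_tcost.
Qed.

Lemma kDTW_point_le k v w :
  (0 < k)%N -> kDTW k (point_curve v) (point_curve w) <= edist v w.
Proof.
move=> k_gt0.
have := kDTW_le_tcost k (s := point_curve v) (t := point_curve w) (T := [:: (0, 0)%N]) isT.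
by rewrite tcostE topk_seq1.
Qed.

Lemma kDTW_tight n v w :
  kDTW n.+1 (point_curve v) (nseq_curve n w) = n.+1%:R * edist v w /\
  kDTW n.+1 (point_curve v) (point_curve w) + kDTW n.+1 (point_curve w) (nseq_curve n w)
    = edist v w.
Proof.
rewrite !kDTW_point_nseq // edist_xx mulr0 addr0; split=> //.
have := kDTW_triangle n.+1 (point_curve v) (nseq_curve n w) (point_curve w).
rewrite kDTW_point_nseq // kDTW_point_nseq // edist_xx mulr0 addr0 ler_pM2l ?ltr0n // => ge.
by apply/eqP; rewrite eq_le ge kDTW_point_le.
Qed.

End Tightness.

Theorem lemma2p3 (R : realType) :
  (* the k-relaxed triangle inequality *)
  (forall (d k : nat) (s t u : curve R d),
      kDTW k s t <= k%:R * (kDTW k s u + kDTW k u t)) /\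
  (* tightness (non-degenerate equality) *)
  (forall (d k : nat), (0 < d)%N -> (0 < k)%N ->
      exists s t u : curve R d,
        0 < kDTW k s t /\ kDTW k s t = k%:R * (kDTW k s u + kDTW k u t)) /\
  (* no uniform constant *)
  (forall d : nat, (0 < d)%N ->
      ~ (exists c : R, 0 < c /\
           forall (k : nat) (s t u : curve R d),
             kDTW k s t <= c * (kDTW k s u + kDTW k u t))).
Proof.
have dist_gt0 d : (0 < d)%N -> 0 < edist 0 (const_mx 1 : 'rV[R]_d).
  by move=> d_gt0; rewrite edist0_const1 sqrtr_gt0 ltr0n.
split; first exact: kDTW_triangle.
split=> [d [//|n] d_gt0 _ | d d_gt0 [c [c_gt0 c_bound]]].
  have [st sut] := kDTW_tight n (0 : 'rV[R]_d) (const_mx 1).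
  exists (point_curve 0), (nseq_curve n (const_mx 1)), (point_curve (const_mx 1)).
  by rewrite st sut mulr_gt0 ?ltr0n ?dist_gt0.
set n := Num.bound c.
have c_lt : c < n.+1%:R.
  by apply: lt_le_trans (archi_boundP (ltW c_gt0)) _; rewrite ler_nat.
have [st sut] := kDTW_tight n (0 : 'rV[R]_d) (const_mx 1).
have := c_bound n.+1 (point_curve 0) (nseq_curve n (const_mx 1)) (point_curve (const_mx 1)).
by rewrite st sut ler_pM2r ?dist_gt0 // leNgt c_lt.
Qed.
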